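(* Let $X$ be a fibrewise pointed space over $B$. Then $\mathrm{TC}_B(X)=0$ if and only if $X$ is fibrewise homotopy equivalent to $B$ (where $B$ is regarded as a fibrewise space over itself via the identity).
   Context: A fibrewise space over $B$ is a space $X$ with a map $p_X:X\to B$; fibrewise maps satisfy $p_Y\circ f=p_X$; fibrewise homotopies $H:X\times I\to Y$ satisfy $p_Y(H(x,t))=p_X(x)$, written $\simeq_B$. A fibrewise pointed space is a fibrewise space $X$ with a map $s_X:B\to X$ such that $p_X\circ s_X=1_B$. For a fibrewise map $f:E\to X$, an open $U\subseteq X$ is fibrewise sectional if there is a fibrewise map $s:U\to E$ with $f\circ s\simeq_B$ the inclusion; $\mathrm{secat}_B(f)$ is the least $k$ such that $X$ is covered by $k+1$ such open sets. $X\times_BX=\{(x,y):p_X(x)=p_X(y)\}$; $P_B(X)=\{(b,\alpha)\in B\times X^I: p_X\circ\alpha\equiv b\}$ with projection $(b,\alpha)\mapsto b$; $\Pi_X(b,\alpha)=(\alpha(0),\alpha(1))$; $\mathrm{TC}_B(X):=\mathrm{secat}_B(\Pi_X)$. *)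

From HB Require Import structures.
From mathcomp Require Import all_boot all_order all_algebra.
From mathcomp Require Import all_classical all_reals.
From mathcomp Require Import topology normedtype.
Import numFieldNormedType.Exports.

Set Implicit Arguments.
Unset Strict Implicit.
Unset Printing Implicit Defensive.

Import Order.TTheory GRing.Theory Num.Theory.
Local Open Scope classical_set_scope.
Local Open Scope ring_scope.

Definition unitI_set (R : realType) : set R := `[0, 1].
Arguments unitI_set : clear implicits.
Notation unitI R := (set_type (unitI_set R)).

Lemma unitI0_mem (R : realType) : (0 : R) \in unitI_set R.
Proof. by apply/mem_set; rewrite /unitI_set /= in_itv /= lexx ler01. Qed.

Lemma unitI1_mem (R : realType) : (1 : R) \in unitI_set R.
Proof. by apply/mem_set; rewrite /unitI_set /= in_itv /= lexx ler01. Qed.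

Definition i0 (R : realType) : unitI R := exist _ 0 (unitI0_mem R).
Definition i1 (R : realType) : unitI R := exist _ 1 (unitI1_mem R).

Section Fibrewise.
Variable R : realType.
Variable B : topologicalType.

Definition fw_map (X Y : topologicalType) (pX : X -> B) (pY : Y -> B)
  (f : X -> Y) : Prop :=
  continuous f /\ forall x, pY (f x) = pX x.

Definition fw_homotopic (X Y : topologicalType) (pX : X -> B) (pY : Y -> B)
  (f g : X -> Y) : Prop :=
  exists H : X * unitI R -> Y,
    [/\ continuous H,
        (forall x t, pY (H (x, t)) = pX x),
        (forall x, H (x, i0 R) = f x) &
        (forall x, H (x, i1 R) = g x)].

Definition fw_homotopy_equivalent (X Y : topologicalType) (pX : X -> B)
  (pY : Y -> B) : Prop :=
  exists (f : X -> Y) (g : Y -> X),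
    [/\ fw_map pX pY f, fw_map pY pX g,
        fw_homotopic pX pX (g \o f) id &
        fw_homotopic pY pY (f \o g) id].

Definition fw_pointed (X : topologicalType) (p : X -> B) (s : B -> X) : Prop :=
  [/\ continuous p, continuous s & forall b, p (s b) = b].

Definition fw_sectional (E X : topologicalType) (pE : E -> B) (pX : X -> B)
  (f : E -> X) (U : set X) : Prop :=
  open U /\
  exists s : set_type U -> E,
    fw_map (pX \o set_val) pE s /\
    fw_homotopic (pX \o set_val) pX (f \o s) set_val.

Definition secat_le (E X : topologicalType) (pE : E -> B) (pX : X -> B)
  (f : E -> X) (k : nat) : Prop :=
  exists U : 'I_k.+1 -> set X,
    (forall i, fw_sectional pE pX f (U i)) /\
    (forall x, exists i, U i x).

Definition secat_eq (E X : topologicalType) (pE : E -> B) (pX : X -> B)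
  (f : E -> X) (k : nat) : Prop :=
  secat_le pE pX f k /\ forall j, secat_le pE pX f j -> (k <= j)%N.

Section PathFibration.
Variables (X : topologicalType) (p : X -> B).

Definition fprod_set : set (X * X) := [set xy | p xy.1 = p xy.2].
Definition fprod : Type := set_type fprod_set.
Definition fprod_proj (u : fprod) : B := p (set_val u).1.

Definition PB_set : set (B * {compact-open, unitI R -> X}) :=
  [set ba | continuous (ba.2 : unitI R -> X) /\ forall t, p (ba.2 t) = ba.1].
Definition PB : Type := set_type PB_set.
Definition PB_proj (u : PB) : B := (set_val u).1.

Lemma Pi_mem (u : PB) :
  ((set_val u).2 (i0 R), (set_val u).2 (i1 R)) \in fprod_set.
Proof.
case: u => [[b a] /set_mem [_ Ha]] /=; apply/mem_set => /=.
by rewrite /fprod_set /=; have /= -> := Ha (i0 R); have /= -> := Ha (i1 R).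
Qed.

Definition Pi (u : PB) : fprod := exist (fun xy => xy \in fprod_set) _ (Pi_mem u).

Definition TC_eq (k : nat) : Prop := secat_eq PB_proj fprod_proj Pi k.

End PathFibration.
End Fibrewise.

From Pilot Require Import Defs.
From mathcomp Require Import all_boot all_order all_algebra.
From mathcomp Require Import all_classical all_reals.
From mathcomp Require Import topology normedtype.
Import numFieldNormedType.Exports.

(** Let p : X -> B be fibrewise pointed by a section s.  Both conditions are
    shown equivalent to the existence of a section g of p which is a
    fibrewise deformation, i.e. g o p ~_B id:
    - [fw_equiv_base_section]: a fibrewise map X -> B over id is p itself,
      so X ~_B B amounts to a section g with g o p ~_B id (p o g = id holds
      on the nose);
    - [section_deformation]: if one fibrewise sectional open set sigma covers
      X x_B X, evaluate it at (s (p x), x); the path sigma(s p x, x) joins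
      two points deformed, by the homotopy Pi o sigma ~_B incl, into s (p x)
      and x, so s o p ~_B id by concatenating three fibrewise homotopies;
    - [deformation_sectional]: conversely, sending (x, y) to the constant
      path at g (p x) is a fibrewise section of Pi up to homotopy, the
      homotopy being g o p ~_B id applied to both coordinates. *)

Set Implicit Arguments.
Unset Strict Implicit.
Unset Printing Implicit Defensive.
Import Order.TTheory GRing.Theory Num.Theory.
Local Open Scope classical_set_scope.
Local Open Scope ring_scope.

Lemma id_continuous (T : topologicalType) : continuous (@id T).
Proof. by move=> x; exact: cvg_id. Qed.

Lemma fst_continuous (U V : topologicalType) : continuous (fst : U * V -> U).
Proof. by move=> x; exact: cvg_fst. Qed.

Lemma snd_continuous (U V : topologicalType) : continuous (snd : U * V -> V).
Proof. by move=> x; exact: cvg_snd. Qed.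

Lemma pair_continuous (T U V : topologicalType) (f : T -> U) (g : T -> V) :
  continuous f -> continuous g -> continuous (fun x => (f x, g x)).
Proof. by move=> cf cg x; apply: cvg_pair; [exact: cf | exact: cg]. Qed.

Lemma comp_continuous (T U V : topologicalType) (f : T -> U) (g : U -> V) :
  continuous f -> continuous g -> continuous (g \o f).
Proof. by move=> cf cg x; apply: continuous_comp; [exact: cf | exact: cg]. Qed.

Lemma set_val_continuous (Y : topologicalType) (A : set Y) :
  continuous (set_val : set_type A -> Y).
Proof. exact: initial_continuous. Qed.

Lemma continuous_into_subspace (Z Y : topologicalType) (A : set Y)
  (f : Z -> set_type A) : continuous (set_val \o f) -> continuous f.
Proof. exact: continuous_comp_initial. Qed.

Section UnitInterval.
Variable R : realType.

(** Retraction of the real line onto [0,1]; it is used to reparametrise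
    homotopies (reversal and concatenation). *)
Definition clamp (r : R) : R := Num.min 1 (Num.max 0 r).

Lemma clamp_mem (r : R) : clamp r \in unitI_set R.
Proof.
apply/mem_set; rewrite /unitI_set /= in_itv /= /clamp.
by rewrite ge_min lexx orTb andbT le_min ler01 le_max lexx.
Qed.

Definition clampI (r : R) : unitI R := exist _ (clamp r) (clamp_mem r).

Lemma clampI_continuous : continuous clampI.
Proof.
apply: continuous_into_subspace => r /=.
apply: continuous_min; first exact: cvg_cst.
by apply: continuous_max; [exact: cvg_cst | exact: cvg_id].
Qed.

Lemma unitI_bounds (t : unitI R) : 0 <= set_val t <= 1.
Proof. by have := set_valP t; rewrite /unitI_set /= in_itv. Qed.

Lemma clampI_val (t : unitI R) : clampI (set_val t) = t.
Proof.
apply: val_inj => /=; rewrite /clamp.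
by case/andP: (unitI_bounds t) => t0 t1; rewrite max_r // min_r.
Qed.

Lemma clampI0 : clampI 0 = i0 R.
Proof. exact: (clampI_val (i0 R)). Qed.

Lemma clampI1 : clampI 1 = i1 R.
Proof. exact: (clampI_val (i1 R)). Qed.

Lemma reparam_continuous (Z : topologicalType) (a b : R) :
  continuous (fun z : Z * unitI R => (z.1, clampI (a * set_val z.2 + b))).
Proof.
apply: pair_continuous; first exact: fst_continuous.
apply: (@comp_continuous _ _ _ (fun z : Z * unitI R => a * set_val z.2 + b));
  last exact: clampI_continuous.
move=> z; apply: cvgD; last exact: cvg_cst.
apply: cvgM; first exact: cvg_cst.
exact: (comp_continuous (@snd_continuous _ _) (@set_val_continuous _ _)).
Qed.

(** I is compact, being the image of the segment [0,1] under the clamp. *)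
Lemma unitI_compact : compact [set: unitI R].
Proof.
have -> : [set: unitI R] = clampI @` `[0, 1].
  apply/seteqP; split=> t // _; exists (set_val t); last exact: clampI_val.
  by rewrite /= in_itv /=; exact: unitI_bounds.
apply: continuous_compact; last exact: segment_compact.
by apply: continuous_subspaceT; exact: clampI_continuous.
Qed.

(** Since I is locally compact and regular, a continuous family of paths
    [Z -> C(I, W)] (compact-open topology) is jointly continuous on [Z * I]. *)
Lemma path_family_continuous (Z W : topologicalType)
  (F : Z -> {compact-open, unitI R -> W}) :
  continuous F -> (forall z, continuous (F z)) ->
  continuous (fun zt : Z * unitI R => F zt.1 zt.2).
Proof.
move=> cF cFz.
have lcI : locally_compact [set: unitI R].
  move=> x _; exists setT; first exact: filterT.
  by split; [exact: unitI_compact | exact: closedT].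
have regI : @regular_space (unitI R) by exact: uniform_regular.
have -> : (fun zt : Z * unitI R => F zt.1 zt.2) = uncurry F.
  by apply: funext => -[].
exact: continuous_uncurry_regular.
Qed.

Lemma constant_paths_continuous (Z W : topologicalType) (g : Z -> W) :
  continuous g ->
  continuous (fun z => (fun _ : unitI R => g z) : {compact-open, unitI R -> W}).
Proof.
move=> cg; apply: (@continuous_curry_fun Z (unitI R) W (fun zt => g zt.1)).
exact: comp_continuous (@fst_continuous _ _) cg.
Qed.

End UnitInterval.

Section FibrewiseHomotopy.
Variables (R : realType) (B X Y : topologicalType) (pX : X -> B) (pY : Y -> B).

Local Notation homotopic := (fw_homotopic R pX pY).

Lemma eq_fw_homotopic (f f' g g' : X -> Y) :
  f =1 f' -> g =1 g' -> homotopic f g -> homotopic f' g'.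
Proof. by move=> /funext <- /funext <-. Qed.

Lemma fw_homotopic_refl (f : X -> Y) : fw_map pX pY f -> homotopic f f.
Proof.
case=> cf hf; exists (f \o fst); split=> //=.
exact: comp_continuous (@fst_continuous _ _) cf.
Qed.

Lemma fw_homotopic_sym (f g : X -> Y) : homotopic f g -> homotopic g f.
Proof.
case=> H [cH hH H0 H1].
exists (H \o (fun z => (z.1, clampI (-1 * set_val z.2 + 1)))); split=> /=.
- exact: comp_continuous (@reparam_continuous R X (-1) 1) cH.
- by move=> x t; rewrite hH.
- by move=> x; rewrite mulr0 add0r clampI1.
- by move=> x; rewrite mulr1 addNr clampI0.
Qed.

(** Concatenation of fibrewise homotopies: run [H1] at double speed on
    [0,1/2] and [H2] on [1/2,1]; the two pieces agree at [t = 1/2] and are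
    glued along the closed cover {t <= 1/2} U {t >= 1/2} of the cylinder. *)
Lemma fw_homotopic_trans (f g h : X -> Y) :
  homotopic f g -> homotopic g h -> homotopic f h.
Proof.
case=> H1 [cH1 hH1 H10 H11] [H2 [cH2 hH2 H20 H21]].
pose G1 := H1 \o (fun z : X * unitI R => (z.1, clampI (2 * set_val z.2 + 0))).
pose G2 := H2 \o (fun z : X * unitI R => (z.1, clampI (2 * set_val z.2 - 1))).
pose lower := [set z : X * unitI R | set_val z.2 <= 2^-1].
pose upper := [set z : X * unitI R | 2^-1 <= set_val z.2].
have ctime : continuous (fun z : X * unitI R => set_val z.2).
  exact: comp_continuous (@snd_continuous _ _) (@set_val_continuous _ _).
have G12 z : set_val z.2 = 2^-1 -> G1 z = G2 z.
  move=> e; rewrite /G1 /G2 /= e mulfV ?pnatr_eq0 // addr0 subrr.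
  by rewrite clampI1 clampI0 H11 H20.
exists (fun z => if set_val z.2 <= 2^-1 then G1 z else G2 z); split.
- apply/continuous_subspace_setT.
  have -> : [set: X * unitI R] = lower `|` upper.
    apply/seteqP; split=> z // _; rewrite /lower /upper /=.
    by case: (lerP (set_val z.2) 2^-1) => hz; [left | right; exact: ltW].
  apply: withinU_continuous.
  + exact: preimage_closed (fun z _ => ctime z) (@closed_le _ _).
  + exact: preimage_closed (fun z _ => ctime z) (@closed_ge _ _).
  + apply: (@subspace_eq_continuous _ _ _ G1).
      by move=> z /set_mem /= hz; rewrite /from_subspace /= hz.
    apply: continuous_subspaceT.
    exact: comp_continuous (@reparam_continuous R X 2 0) cH1.
  + apply: (@subspace_eq_continuous _ _ _ G2).
      move=> z /set_mem /= hz; rewrite /from_subspace /=; case: ifP => // hz'.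
      by rewrite G12 //; apply/eqP; rewrite eq_le hz hz'.
    apply: continuous_subspaceT.
    exact: comp_continuous (@reparam_continuous R X 2 (-1)) cH2.
- by move=> x t; case: ifP => _; rewrite /G1 /G2 /= ?hH1 ?hH2.
- move=> x; rewrite /= ifT ?invr_ge0 ?ler0n //.
  by rewrite /G1 /= mulr0 addr0 clampI0 H10.
- move=> x; rewrite /= ifF; last first.
    by apply/negbTE; rewrite -ltNge invf_lt1 ?ltr0n ?ltr1n.
  by rewrite /G2 /= mulr1 addrK clampI1 H21.
Qed.

End FibrewiseHomotopy.

Section HomotopyComposition.
Variables (R : realType) (B Z X Y W : topologicalType).
Variables (pZ : Z -> B) (pX : X -> B) (pY : Y -> B) (pW : W -> B).

Lemma fw_homotopic_precomp (e : Z -> X) (f g : X -> Y) :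
  fw_map pZ pX e -> fw_homotopic R pX pY f g ->
  fw_homotopic R pZ pY (f \o e) (g \o e).
Proof.
case=> ce he [H [cH hH H0 H1]].
exists (H \o (fun z => (e z.1, z.2))); split=> //=.
- apply: comp_continuous cH; apply: pair_continuous (@snd_continuous _ _).
  exact: comp_continuous (@fst_continuous _ _) ce.
- by move=> z t; rewrite hH he.
Qed.

Lemma fw_homotopic_postcomp (q : Y -> W) (f g : X -> Y) :
  fw_map pY pW q -> fw_homotopic R pX pY f g ->
  fw_homotopic R pX pW (q \o f) (q \o g).
Proof.
case=> cq hq [H [cH hH H0 H1]].
exists (q \o H); split=> /=; first exact: comp_continuous cH cq.
- by move=> x t; rewrite hq hH.
- by move=> x; rewrite H0.
- by move=> x; rewrite H1.
Qed.

Lemma fw_homotopic_path_family (F : Z -> {compact-open, unitI R -> W}) :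
  continuous F -> (forall z, continuous (F z)) ->
  (forall z t, pW (F z t) = pZ z) ->
  fw_homotopic R pZ pW (fun z => F z (i0 R)) (fun z => F z (i1 R)).
Proof.
move=> cF cFz hF; exists (fun zt => F zt.1 zt.2); split=> //.
exact: path_family_continuous.
Qed.

End HomotopyComposition.

Section FibreProduct.
Variables (B X : topologicalType) (p : X -> B).

Lemma fprod_fibre (u : Defs.fprod p) : p (set_val u).1 = p (set_val u).2.
Proof. exact: set_valP u. Qed.

Lemma fprod_fst_map : fw_map (@fprod_proj B X p) p (fun u => (set_val u).1).
Proof.
split=> //; exact: comp_continuous (@set_val_continuous _ _) (@fst_continuous _ _).
Qed.

Lemma fprod_snd_map : fw_map (@fprod_proj B X p) p (fun u => (set_val u).2).
Proof.
split=> [|u]; last by rewrite /fprod_proj fprod_fibre.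
exact: comp_continuous (@set_val_continuous _ _) (@snd_continuous _ _).
Qed.

Lemma fprod_proj_continuous : continuous p -> continuous (@fprod_proj B X p).
Proof. exact: comp_continuous (proj1 fprod_fst_map). Qed.

Definition fpair (Z : Type) (pZ : Z -> B) (a1 a2 : Z -> X)
  (h1 : forall z, p (a1 z) = pZ z) (h2 : forall z, p (a2 z) = pZ z) (z : Z) :
  Defs.fprod p :=
  exist _ (a1 z, a2 z)
    (@mem_set _ (fprod_set p) (a1 z, a2 z) (etrans (h1 z) (esym (h2 z)))).

Lemma fpair_continuous (Z : topologicalType) (pZ : Z -> B) (a1 a2 : Z -> X)
  h1 h2 : continuous a1 -> continuous a2 -> continuous (@fpair Z pZ a1 a2 h1 h2).
Proof. by move=> c1 c2; apply: continuous_into_subspace; exact: pair_continuous. Qed.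

Lemma fw_homotopic_fpair (R : realType) (Z : topologicalType) (pZ : Z -> B)
  (a1 a2 b1 b2 : Z -> X) ha1 ha2 hb1 hb2 :
  fw_homotopic R pZ p a1 b1 -> fw_homotopic R pZ p a2 b2 ->
  fw_homotopic R pZ (@fprod_proj B X p)
    (@fpair Z pZ a1 a2 ha1 ha2) (@fpair Z pZ b1 b2 hb1 hb2).
Proof.
move=> [H1 [cH1 hH1 H10 H11]] [H2 [cH2 hH2 H20 H21]].
have hH1' z : p (H1 z) = pZ z.1 by case: z.
have hH2' z : p (H2 z) = pZ z.1 by case: z.
exists (@fpair _ (pZ \o fst) H1 H2 hH1' hH2').
split=> //; first exact: fpair_continuous.
- by move=> z; apply: val_inj; rewrite /= H10 H20.
- by move=> z; apply: val_inj; rewrite /= H11 H21.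
Qed.

End FibreProduct.

Lemma secat_eq0P (R : realType) (B E Y : topologicalType) (pE : E -> B)
  (pY : Y -> B) (f : E -> Y) :
  secat_eq R pE pY f 0 <->
  exists2 U, fw_sectional R pE pY f U & forall y, U y.
Proof.
split=> [[[U [hU cov]] _] | [U hU cov]].
  exists (U ord0) => // y; have [i] := cov y; by rewrite (ord1 i).
split=> [|//]; exists (fun _ => U); split=> // y; by exists ord0.
Qed.

Section PathFibration.
Variables (R : realType) (B X : topologicalType) (p : X -> B).

Lemma PB_path_continuous (u : PB R p) : continuous (set_val u).2.
Proof. exact: (set_valP u).1. Qed.

Lemma PB_path_fibre (u : PB R p) t : p ((set_val u).2 t) = PB_proj u.
Proof. exact: (set_valP u).2. Qed.

Lemma PB_paths_continuous :
  continuous (fun u : PB R p => (set_val u).2 : {compact-open, unitI R -> X}).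
Proof. exact: comp_continuous (@set_val_continuous _ _) (@snd_continuous _ _). Qed.

Section ConstantPaths.
Variables (g : B -> X) (hg : forall b, p (g b) = b).

Lemma const_path_mem (b : B) :
  ((b, fun _ => g b) : B * {compact-open, unitI R -> X}) \in PB_set p.
Proof. by apply/mem_set; split=> //=; exact: cst_continuous. Qed.

Definition const_path (b : B) : PB R p :=
  exist (fun u => u \in PB_set p) _ (const_path_mem b).

Lemma const_path_continuous : continuous g -> continuous const_path.
Proof.
move=> cg; apply: continuous_into_subspace => /=.
apply: pair_continuous; first exact: id_continuous.
exact: constant_paths_continuous.
Qed.

End ConstantPaths.
End PathFibration.

Section TopologicalComplexityZero.
Variables (R : realType) (B X : topologicalType) (p : X -> B).
Hypothesis cp : continuous p.

(** Restrict
    the homotopy [Pi_X o sigma ~_B incl] to the points [(s (p x), x)]: its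
    two components deform the endpoints of the path [sigma (s (p x), x)] to
    [s (p x)] and to [x], while the path itself joins these endpoints. *)
Lemma section_deformation (s : B -> X) (U : set (Defs.fprod p)) :
  continuous s -> (forall b, p (s b) = b) ->
  fw_sectional R (@PB_proj R B X p) (@fprod_proj B X p) (@Pi R B X p) U ->
  (forall u, U u) -> fw_homotopic R p p (s \o p) id.
Proof.
move=> cs hs [_ [sigma [[csigma hsigma] hK]]] covU.
pose diag := @fpair B X p X p (s \o p) id (fun x => hs (p x)) (fun x => erefl).
pose emb x : set_type U := exist (fun u => u \in U) (diag x) (mem_set (covU _)).
have emb_map : fw_map p (@fprod_proj B X p \o set_val) emb.
  split=> [|x]; last exact: hs.
  apply: continuous_into_subspace; apply: fpair_continuous.
    exact: comp_continuous cp cs.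
  exact: id_continuous.
have hKe := fw_homotopic_precomp emb_map hK.
have to_fst := fw_homotopic_postcomp (fprod_fst_map p) hKe.
have to_snd := fw_homotopic_postcomp (fprod_snd_map p) hKe.
have along_path : fw_homotopic R p p
    (fun x => (set_val (sigma (emb x))).2 (i0 R))
    (fun x => (set_val (sigma (emb x))).2 (i1 R)).
  apply: (fw_homotopic_path_family (F := fun x => (set_val (sigma (emb x))).2))
    => [||x t].
  - exact: comp_continuous (comp_continuous (proj1 emb_map) csigma)
      (@PB_paths_continuous R B X p).
  - by move=> x; exact: PB_path_continuous.
  - by rewrite PB_path_fibre hsigma; exact: (proj2 emb_map).
exact: fw_homotopic_trans (fw_homotopic_sym to_fst)
  (fw_homotopic_trans along_path to_snd).
Qed.

(** Conversely, a section [g] with [g o p ~_B id] makes all of [X x_B X]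
    fibrewise sectional: send [(x, y)] to the constant path at [g (p x)].
    Then [Pi_X o sigma] is the pair [(g p x, g p y)], which the deformation,
    applied to both coordinates, moves back to [(x, y)]. *)
Lemma deformation_sectional (g : B -> X) :
  continuous g -> (forall b, p (g b) = b) -> fw_homotopic R p p (g \o p) id ->
  fw_sectional R (@PB_proj R B X p) (@fprod_proj B X p) (@Pi R B X p) setT.
Proof.
move=> cg hg hgp; split; first exact: openT.
pose pZ := @fprod_proj B X p \o (set_val : set_type setT -> Defs.fprod p).
have val_map : fw_map pZ (@fprod_proj B X p) set_val.
  by split=> //; exact: set_val_continuous.
exists (@const_path R B X p g hg \o pZ); split.
  split=> //; apply: comp_continuous (@const_path_continuous R B X p g hg cg).
  exact: comp_continuous (proj1 val_map) (fprod_proj_continuous cp).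
have hfst := fw_homotopic_precomp (fprod_fst_map p) hgp.
have hsnd := fw_homotopic_precomp (fprod_snd_map p) hgp.
have fibre1 (u : Defs.fprod p) : p (set_val u).1 = fprod_proj u by [].
have fibre2 (u : Defs.fprod p) : p (set_val u).2 = fprod_proj u.
  exact: esym (fprod_fibre u).
have gfibre1 (u : Defs.fprod p) : p (g (p (set_val u).1)) = fprod_proj u.
  exact: hg.
have gfibre2 (u : Defs.fprod p) : p (g (p (set_val u).2)) = fprod_proj u.
  by rewrite hg fibre2.
have hpair := fw_homotopic_fpair gfibre1 gfibre2 fibre1 fibre2 hfst hsnd.
apply: eq_fw_homotopic (fw_homotopic_precomp val_map hpair).
  move=> v; apply: val_inj => /=; rewrite /pZ /fprod_proj /=.
  by rewrite -fprod_fibre.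
by move=> v; apply: val_inj; exact: esym (surjective_pairing _).
Qed.

End TopologicalComplexityZero.

(** X is fibrewise homotopy equivalent to B exactly when p admits a section
    [g] with [g o p ~_B id]; the equivalence is then given by [p] and [g],
    since any fibrewise map [X -> B] over [id] must be [p] itself. *)
Lemma fw_equiv_base_section (R : realType) (B X : topologicalType)
  (p : X -> B) : continuous p ->
  fw_homotopy_equivalent R p (@id B) <->
  exists g : B -> X,
    [/\ continuous g, forall b, p (g b) = b & fw_homotopic R p p (g \o p) id].
Proof.
move=> cp; split=> [[f [g [[_ hf] [cg hg] hgf _]]] | [g [cg hg hgp]]].
  have f_eq_p : f = p by apply: funext => x; exact: hf.
  by subst f; exists g.
have pg_id : p \o g = id by apply: funext => b; exact: hg.
exists p, g; split=> //; rewrite pg_id.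
by apply: fw_homotopic_refl; split=> //; exact: id_continuous.
Qed.

Theorem corollary2p7 (R : realType) (B X : topologicalType)
  (p : X -> B) (s : B -> X) :
  fw_pointed p s ->
  (TC_eq R p 0 <-> fw_homotopy_equivalent R p (@id B)).
Proof.
case=> cp cs hs; rewrite /TC_eq secat_eq0P fw_equiv_base_section //.
split=> [[U sectU covU] | [g [cg hg hgp]]].
  by exists s; split=> //; exact: section_deformation sectU covU.
by exists setT => //; exact: deformation_sectional hgp.
Qed.
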